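(* For the Rogers--Szeg\H{o} polynomials, we have \[ \mu_{n,r,s} = \sum_{j=0}^r (-1)^{r-j}\begin{bmatrix} r \\ j \end{bmatrix}_q \begin{bmatrix} n+j \\ s \end{bmatrix}_q q^{\frac{r-j}{2}}q^{\frac{(n+j-s)^2}{2}}, \] where \( \begin{bmatrix} n \\ m \end{bmatrix}_q \) is the \( q \)-binomial coefficient given by \( \begin{bmatrix} n \\ m \end{bmatrix}_q =\frac{(1-q^n)(1-q^{n-1})\cdots(1-q^{n-m+1})}{(1-q^m)(1-q^{m-1})\cdots(1-q)} \).
   Context: Let \( (\Phi_n(z))_{n\ge0} \) be monic orthogonal polynomials on the unit circle (OPUC) with \( \deg\Phi_n=n \), \( \Phi_0=1 \), satisfying Szeg\H{o}'s recurrence \( \Phi_{n+1}(z) = z\Phi_n(z) - \overline{\alpha_n}\Phi_n^*(z) \), where \( \Phi_n^*(z)=z^n\overline{\Phi_n}(1/z) \) is the reverse polynomial and \( (\alpha_n)_{n\ge0} \) are the Verblunsky coefficients with \( |\alpha_n|<1 \). They are orthogonal with respect to the linear functional \( \mathcal{L} \) on Laurent polynomials with \( \mathcal{L}(1)=1 \) and \( \mathcal{L}(\Phi_m(z)\overline{\Phi_n}(1/z))=\kappa_n\delta_{m,n} \), \( \kappa_n>0 \). Define the inner product \( \langle f(z),g(z)\rangle=\mathcal{L}(f(z)\overline{g}(1/z)) \) and, for nonnegative integers \( n,r,s \), the generalized moment \( \mu_{n,r,s}=\langle \Phi_s(z),z^n\Phi_r(z)\rangle/\langle\Phi_s(z),\Phi_s(z)\rangle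 \). For \( q\in(0,1) \), the Rogers--Szeg\H{o} polynomials are the OPUC with Verblunsky coefficients \( \alpha_n=(-1)^nq^{(n+1)/2} \), \( n\ge0 \). *)

From HB Require Import structures.
From mathcomp Require Import all_boot all_order all_algebra.
From mathcomp Require Import complex.
From mathcomp Require Import reals.
Set Implicit Arguments. Unset Strict Implicit. Unset Printing Implicit Defensive.
Import Order.TTheory GRing.Theory Num.Theory.
Local Open Scope ring_scope.

Section OPUC.
Variable C : numClosedFieldType.

(* reverse polynomial Phi_n^*(z) = z^n conj(Phi_n)(1/z), for p of degree <= n *)
Definition rev_star (n : nat) (p : {poly C}) : {poly C} :=
  \poly_(k < n.+1) (p`_(n - k))^*.

Fixpoint Phi (alpha : nat -> C) (n : nat) : {poly C} :=
  match n with
  | 0 => 1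
  | m.+1 => 'X * Phi alpha m - (alpha m)^* *: rev_star m (Phi alpha m)
  end.

(* A linear functional L on Laurent polynomials is determined by its moments
   c k = L(z^k), k : int.  <f,g> = L(f(z) conj(g)(1/z)). *)
Definition ip (c : int -> C) (f g : {poly C}) : C :=
  \sum_(j < size f) \sum_(k < size g)
     f`_j * (g`_k)^* * c (j%:Z - k%:Z).

Definition orthogonal_functional (alpha : nat -> C) (c : int -> C) : Prop :=
  c 0 = 1 /\
  exists kappa : nat -> C,
    (forall n, 0 < kappa n) /\
    (forall m n, ip c (Phi alpha m) (Phi alpha n) = if m == n then kappa n else 0).

Definition gen_moment (alpha : nat -> C) (c : int -> C) (n r s : nat) : C :=
  ip c (Phi alpha s) ('X^n * Phi alpha r) / ip c (Phi alpha s) (Phi alpha s).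

End OPUC.

(* q-binomial coefficient [n choose m]_q as the product quotient
   (1-q^n)...(1-q^(n-m+1)) / ((1-q^m)...(1-q)); equals 0 when m > n. *)
Definition qbinom (F : fieldType) (q : F) (n m : nat) : F :=
  (\prod_(i < m) (1 - q ^+ (n - i))) / (\prod_(i < m) (1 - q ^+ i.+1)).

Definition rs_alpha (R : realType) (q : R) (n : nat) : R[i] :=
  (((-1) ^+ n * Num.sqrt q ^+ n.+1 : R)%:C)%C.

From HB Require Import structures.
From mathcomp Require Import all_boot all_order all_algebra complex reals zify ring.
(* With t = q^(1/2), Szego's recurrence for the Verblunsky coefficients
   (-1)^n t^(n+1) is solved, through the q-Pascal rule, by
   Phi_r(z) = sum_k (-1)^(r-k) [r,k]_q t^(r-k) z^k.  Orthogonality of Phi_m to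
   Phi_0, on either side, is a unitriangular system for the moments c(k) and
   c(-k), whose solution is t^(k^2).  Reversing the sum defining <Phi_s, z^m>
   turns it into Cauchy's q-binomial theorem, so that
   <Phi_s, z^m> = [m,s]_q t^((m-s)^2) (q;q)_s.  Expanding z^n Phi_r in
   monomials and dividing by <Phi_s, Phi_s> = (q;q)_s gives the formula. *)

Set Implicit Arguments. Unset Strict Implicit. Unset Printing Implicit Defensive.
Import Order.TTheory GRing.Theory Num.Theory.
Local Open Scope ring_scope.

Definition qfact (R : ringType) (q : R) (k : nat) : R :=
  \prod_(i < k) (1 - q ^+ i.+1).

Definition qfalling (R : ringType) (q : R) (n k : nat) : R :=
  \prod_(i < k) (1 - q ^+ (n - i)).

Lemma rmorph_qbinom (F K : fieldType) (f : {rmorphism F -> K}) (q : F) n k :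
  f (qbinom q n k) = qbinom (f q) n k.
Proof.
rewrite /qbinom fmorph_div !rmorph_prod.
by congr (_ / _); apply: eq_bigr => i _; rewrite rmorphB rmorph1 rmorphXn.
Qed.

Section QBinomial.
Variables (F : fieldType) (q : F).

Lemma qbinomE n k : qbinom q n k = qfalling q n k / qfact q k.
Proof. by []. Qed.

Lemma qfactS k : qfact q k.+1 = qfact q k * (1 - q ^+ k.+1).
Proof. by rewrite /qfact big_ord_recr. Qed.

Lemma qfalling_small n k : (n < k)%N -> qfalling q n k = 0.
Proof.
move=> ltnk; rewrite /qfalling (bigD1 (Ordinal ltnk)) //=.
by rewrite subnn expr0 subrr mul0r.
Qed.

Lemma qfallingS n k : qfalling q n.+1 k.+1 = (1 - q ^+ n.+1) * qfalling q n k.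
Proof. by rewrite /qfalling big_ord_recl subn0. Qed.

Lemma qfalling_recr n k : qfalling q n k.+1 = qfalling q n k * (1 - q ^+ (n - k)).
Proof. by rewrite /qfalling big_ord_recr. Qed.

Lemma qfallingMqfact n k : (k <= n)%N -> qfalling q n k * qfact q (n - k) = qfact q n.
Proof.
elim: k => [|k IHk] lekn; first by rewrite /qfalling big_ord0 mul1r subn0.
rewrite qfalling_recr -mulrA -IHk ?(ltnW lekn) //; congr (_ * _).
by rewrite -[in RHS](subnSK lekn) qfactS mulrC subnSK.
Qed.

Lemma qbinom0 n : qbinom q n 0 = 1.
Proof. by rewrite /qbinom !big_ord0 divr1. Qed.

Lemma qbinom_small n k : (n < k)%N -> qbinom q n k = 0.
Proof. by move=> ltnk; rewrite qbinomE qfalling_small ?mul0r. Qed.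

Lemma qfalling_prod m s : q != 0 ->
  qfalling q m s = \prod_(l < s) (1 + - (q ^+ m.+1 / q ^+ s) * q ^+ l).
Proof.
move=> q_neq0; have qX_neq0 k : q ^+ k != 0 by rewrite expf_neq0.
have [lesm | ltms] := leqP s m.
  rewrite /qfalling (reindex_inj rev_ord_inj); apply: eq_bigr => l _ /=.
  have ltls := ltn_ord l.
  rewrite mulNr mulrAC -exprD.
  have -> : (m.+1 + l = m - (s - l.+1) + s)%N by lia.
  by rewrite exprD mulfK.
rewrite qfalling_small //; have lt_s : (s - m.+1 < s)%N by lia.
rewrite (bigD1 (Ordinal lt_s)) //= mulNr mulrAC -exprD.
have -> : (m.+1 + (s - m.+1) = s)%N by lia.
by rewrite divff // subrr mul0r.
Qed.

Hypothesis q_not_root1 : forall i, q ^+ i.+1 != 1.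

Lemma qfact_neq0 k : qfact q k != 0.
Proof. by apply/prodf_neq0 => i _; rewrite subr_eq0 eq_sym q_not_root1. Qed.

Lemma qbinomMqfact n k : qbinom q n k * qfact q k = qfalling q n k.
Proof. by rewrite qbinomE divfK ?qfact_neq0. Qed.

Lemma qbinomnn n : qbinom q n n = 1.
Proof.
have := qfallingMqfact (leqnn n); rewrite subnn /qfact big_ord0 mulr1 => qfallingnn.
by rewrite qbinomE qfallingnn divff ?qfact_neq0.
Qed.

Lemma qbinomS n k :
  qbinom q n.+1 k.+1 = qbinom q n k + q ^+ k.+1 * qbinom q n k.+1.
Proof.
apply: (mulIf (qfact_neq0 k.+1)).
rewrite mulrDl (qbinomMqfact n.+1) -(mulrA (q ^+ k.+1)) !qbinomMqfact.
rewrite qfactS (mulrA (qbinom q n k)) qbinomMqfact qfallingS qfalling_recr.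
have [lekn | ltnk] := leqP k n; last by rewrite qfalling_small // !(mulr0, mul0r, addr0).
have -> : q ^+ n.+1 = q ^+ k.+1 * q ^+ (n - k) by rewrite -exprD addSn subnKC.
ring.
Qed.

Lemma qbinom_sub n k : (k <= n)%N -> qbinom q n (n - k) = qbinom q n k.
Proof.
move=> lekn; apply: (mulIf (qfact_neq0 k)); apply: (mulIf (qfact_neq0 (n - k))).
rewrite [LHS]mulrAC !qbinomMqfact (qfallingMqfact lekn).
by have := qfallingMqfact (leq_subr k n); rewrite subKn.
Qed.

Lemma qbinomial_theorem s (x : F) :
  \prod_(l < s) (1 + x * q ^+ l) =
  \sum_(i < s.+1) qbinom q s i * q ^+ 'C(i, 2) * x ^+ i.
Proof.
elim: s x => [|s IHs] x; first by rewrite big_ord0 big_ord1 qbinom0 !mulr1.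
rewrite big_ord_recl mulr1.
under eq_bigr => l _ do rewrite lift0 exprS mulrA.
rewrite IHs mulrDl mul1r mulr_sumr [in RHS]big_ord_recl [X in X + _]big_ord_recl.
rewrite !qbinom0 !bin_small // !mulr1 -addrA; congr (_ + _).
under [in RHS]eq_bigr => i _ do rewrite lift0 qbinomS !mulrDl.
rewrite big_split /= [X in _ = _ + X]big_ord_recr /= qbinom_small // mulr0 !mul0r addr0.
rewrite addrC; congr (_ + _); apply: eq_bigr => i _; rewrite binS bin1.
  by rewrite !exprMn !exprD !exprS; ring.
by rewrite !exprMn !exprD; ring.
Qed.

End QBinomial.

Lemma sum_ord_widen (V : nmodType) n m (F : nat -> V) : (n <= m)%N ->
  (forall j, (n <= j)%N -> F j = 0) -> \sum_(j < n) F j = \sum_(j < m) F j.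
Proof.
move=> lenm F0; rewrite (big_ord_widen m F lenm) big_mkcond.
by apply: eq_bigr => j _; case: ltnP => // /F0 ->.
Qed.

Section InnerProduct.
Variables (C : numClosedFieldType) (c : int -> C).

Lemma ip_widen (f g : {poly C}) A B : (size f <= A)%N -> (size g <= B)%N ->
  ip c f g = \sum_(j < A) \sum_(k < B) f`_j * (g`_k)^* * c (j%:Z - k%:Z).
Proof.
move=> leA leB; pose G j k := f`_j * (g`_k)^* * c (j%:Z - k%:Z).
rewrite /ip (@sum_ord_widen _ _ _ (fun j => \sum_(k < size g) G j k) leA).
  apply: eq_bigr => j _; apply: (@sum_ord_widen _ _ _ (G j) leB) => k.
  by move/(nth_default 0); rewrite /G => ->; rewrite conjC0 mulr0 mul0r.
move=> j /(nth_default 0) fj0; apply: big1 => k _.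
by rewrite /G fj0 !mul0r.
Qed.

Lemma ip_Xn (f : {poly C}) A m : (size f <= A)%N ->
  ip c f 'X^m = \sum_(j < A) f`_j * c (j%:Z - m%:Z).
Proof.
move=> leA; rewrite (ip_widen leA (leqnn (size 'X^m))) size_polyXn.
apply: eq_bigr => j _; rewrite big_ord_recr /= big1 => [|k _].
  by rewrite add0r coefXn eqxx conjC1 mulr1.
by rewrite coefXn ltn_eqF ?conjC0 ?mulr0 ?mul0r.
Qed.

Lemma ip_expandr (f g : {poly C}) B : (size g <= B)%N ->
  ip c f g = \sum_(k < B) (g`_k)^* * ip c f 'X^k.
Proof.
move=> leB; rewrite (ip_widen (leqnn (size f)) leB) exchange_big.
apply: eq_bigr => k _; rewrite (ip_Xn _ (leqnn _)) mulr_sumr.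
by apply: eq_bigr => j _; rewrite mulrCA mulrA.
Qed.

End InnerProduct.

Lemma unitriangular_solution_unique (K : ringType) (a : nat -> nat -> K)
    (x y : nat -> K) :
  (forall m, a m m = 1) -> x 0%N = y 0%N ->
  (forall m, \sum_(j < m.+2) a m.+1 j * x j = 0) ->
  (forall m, \sum_(j < m.+2) a m.+1 j * y j = 0) ->
  x =1 y.
Proof.
move=> a_diag xy0 eqx eqy k; elim/ltn_ind: k => -[//|m] IHm.
have eq_prefix : \sum_(j < m.+1) a m.+1 j * x j = \sum_(j < m.+1) a m.+1 j * y j.
  by apply: eq_bigr => j _; rewrite IHm.
move: (eqx m) (eqy m); rewrite (big_ord_recr m.+1) (big_ord_recr m.+1) /=.
rewrite a_diag !mul1r eq_prefix => ex ey.
by apply: (addrI (\sum_(j < m.+1) a m.+1 j * y j)); rewrite ex ey.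
Qed.

Lemma double_bin2 n : (2 * 'C(n, 2) = n * n.-1)%N.
Proof. by elim: n => // -[|n] IHn //; rewrite binS bin1 mulnDr IHn /=; lia. Qed.

Section RogersSzego.
Variables (C : numClosedFieldType) (t : C).
Hypotheses (t_real : t^* = t) (t_neq0 : t != 0).
Local Notation q := (t ^+ 2).
Hypothesis q_not_root1 : forall i, q ^+ i.+1 != 1.

Definition rs_coef r k : C := (-1) ^+ (r - k) * qbinom q r k * t ^+ (r - k).

Definition rs_poly r : {poly C} := \poly_(k < r.+1) rs_coef r k.

Lemma rs_coef_small r k : (r < k)%N -> rs_coef r k = 0.
Proof. by move=> ltrk; rewrite /rs_coef qbinom_small // mulr0 mul0r. Qed.

Lemma rs_coefnn r : rs_coef r r = 1.
Proof. by rewrite /rs_coef subnn qbinomnn // !mulr1. Qed.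

Lemma rs_coef_rev r k : (k <= r)%N ->
  rs_coef r (r - k) = (-1) ^+ k * qbinom q r k * t ^+ k.
Proof. by move=> lekr; rewrite /rs_coef subKn // qbinom_sub. Qed.

Lemma rs_coefS r k : rs_coef r.+1 k.+1 =
  rs_coef r k + (-1) ^+ (r - k) * t ^+ (r - k) * q ^+ k.+1 * qbinom q r k.+1.
Proof. by rewrite /rs_coef subSS qbinomS //; ring. Qed.

Lemma conj_rs_coef r k : (rs_coef r k)^* = rs_coef r k.
Proof.
(* The rmorphism lemmas expose conjugation as its canonical rmorphism, which
   [t_real] matches only up to conversion. *)
have tc : (Num.conj_op : {rmorphism C -> C}) t = t := t_real.
by rewrite /rs_coef 2!rmorphM (rmorph_qbinom Num.conj_op) !rmorphXn rmorphN1 tc.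
Qed.

Lemma coef_rs_poly r k : (rs_poly r)`_k = rs_coef r k.
Proof.
rewrite coef_poly; case: ltnP => // lerk.
by rewrite rs_coef_small.
Qed.

Lemma size_rs_poly r : (size (rs_poly r) <= r.+1)%N.
Proof. exact: size_poly. Qed.

Lemma coef_rev_star_rs_poly r k :
  (rev_star r (rs_poly r))`_k = (-1) ^+ k * qbinom q r k * t ^+ k.
Proof.
rewrite coef_poly ltnS; case: leqP => [lekr | ltrk].
  by rewrite coef_rs_poly conj_rs_coef rs_coef_rev.
by rewrite qbinom_small // mulr0 mul0r.
Qed.

Lemma rs_coef_sum s m :
  \sum_(k < s.+1) rs_coef s k * t ^+ (absz (k%:Z - m%:Z) ^ 2) =
  qbinom q m s * t ^+ (absz (m%:Z - s%:Z) ^ 2) * qfact q s.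
Proof.
have q_neq0 : q != 0 by rewrite expf_neq0.
rewrite mulrAC qbinomMqfact // (qfalling_prod _ _ q_neq0) qbinomial_theorem //.
rewrite mulr_suml (reindex_inj rev_ord_inj); apply: eq_bigr => i _ /=.
have leis : (i <= s)%N by rewrite -ltnS.
rewrite subSS rs_coef_rev // (exprNn (q ^+ m.+1 / q ^+ s)) expr_div_n -!exprM.
have t_exp : t ^+ i * t ^+ (absz ((s - i)%:Z - m%:Z) ^ 2) * t ^+ (2 * s * i) =
    t ^+ (absz (m%:Z - s%:Z) ^ 2) * t ^+ (2 * 'C(i, 2)) * t ^+ (2 * m.+1 * i).
  rewrite -!exprD; congr (_ ^+ _).
  have := double_bin2 i; case: (nat_of_ord i) leis => [|j] /=; nia.
rewrite -(mulrA _ (t ^+ i)) -(mulfK (expf_neq0 (2 * s * i) t_neq0) (t ^+ i * _)) t_exp.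
by field; rewrite expf_neq0.
Qed.

Variable alpha : nat -> C.
Hypothesis alphaE : forall n, alpha n = (-1) ^+ n * t ^+ n.+1.

Lemma conj_alpha n : (alpha n)^* = alpha n.
Proof.
have tc : (Num.conj_op : {rmorphism C -> C}) t = t := t_real.
by rewrite alphaE rmorphM !rmorphXn rmorphN1 tc.
Qed.

Lemma Phi_rs r : Phi alpha r = rs_poly r.
Proof.
elim: r => [|r IHr]; apply/polyP => k.
  rewrite coef_rs_poly coef1 /rs_coef.
  by case: k => [|k]; rewrite ?qbinom0 ?qbinom_small ?expr0 ?mulr1 ?mulr0.
rewrite /= IHr coefB coefXM coefZ coef_rev_star_rs_poly conj_alpha alphaE.
case: k => [|k] /=; rewrite !coef_rs_poly.
  by rewrite /rs_coef !qbinom0 subn0 !expr0 !mulr1 sub0r [(-1) ^+ r.+1]exprS mulN1r mulNr.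
rewrite rs_coefS; congr (_ + _).
have [lekr | ltrk] := leqP k r; last first.
  by rewrite qbinom_small ?(mulr0, mul0r, oppr0) //; apply: ltnW.
have sign_rk : (-1) ^+ (r - k) = (-1) ^+ r * (-1) ^+ k :> C.
  by rewrite -signr_odd oddB // signr_addb !signr_odd.
have t_rk : t ^+ (r - k) * q ^+ k.+1 = t ^+ r.+1 * t ^+ k.+1.
  by rewrite -exprM -!exprD; congr (_ ^+ _); lia.
by rewrite sign_rk -(mulrA _ (t ^+ (r - k))) t_rk !exprS; ring.
Qed.

Variable c : int -> C.
Hypotheses (c0 : c 0 = 1)
  (Phi_orth : forall m n, m != n -> ip c (Phi alpha m) (Phi alpha n) = 0).

Lemma rs_moment z : c z = t ^+ (absz z ^ 2).
Proof.
have sum_rs_coef_sq m : \sum_(j < m.+2) rs_coef m.+1 j * t ^+ (j ^ 2) = 0.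
  have := rs_coef_sum m.+1 0; rewrite qbinom_small // !mul0r => sum0.
  by rewrite -[RHS]sum0; apply: eq_bigr => j _; rewrite subr0.
have c_pos : (fun k => c (Posz k)) =1 (fun k => t ^+ (k ^ 2)).
  apply: (unitriangular_solution_unique rs_coefnn _ _ sum_rs_coef_sq) => [|m].
    by rewrite /= c0.
  have := Phi_orth (isT : m.+1 != 0%N).
  rewrite Phi_rs /= -(expr0 'X) (ip_Xn c 0 (size_rs_poly _)) => orth.
  by rewrite -[RHS]orth; apply: eq_bigr => j _; rewrite coef_rs_poly subr0.
have c_neg : (fun k => c (- Posz k)) =1 (fun k => t ^+ (k ^ 2)).
  apply: (unitriangular_solution_unique rs_coefnn _ _ sum_rs_coef_sq) => [|m].
    by rewrite /= oppr0 c0.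
  have := Phi_orth (isT : 0%N != m.+1).
  rewrite [Phi _ m.+1]Phi_rs (ip_expandr c _ (size_rs_poly _)) => orth.
  rewrite -[RHS]orth; apply: eq_bigr => j _; rewrite coef_rs_poly conj_rs_coef /=.
  have size1 : (size (1%R : {poly C}) <= 1)%N by rewrite size_poly1.
  by rewrite (ip_Xn c j size1) big_ord1 coef1 mul1r sub0r.
case: z => k; first exact: c_pos.
by rewrite NegzE c_neg abszN.
Qed.

Lemma ip_rs_poly_Xn s m :
  ip c (rs_poly s) 'X^m = qbinom q m s * t ^+ (absz (m%:Z - s%:Z) ^ 2) * qfact q s.
Proof.
rewrite (ip_Xn c m (size_rs_poly s)) -rs_coef_sum.
by apply: eq_bigr => k _; rewrite coef_rs_poly rs_moment.
Qed.

Lemma ip_rs_poly s : ip c (rs_poly s) (rs_poly s) = qfact q s.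
Proof.
rewrite (ip_expandr c _ (size_rs_poly s)) big_ord_recr /= big1 => [|k _].
  rewrite add0r coef_rs_poly conj_rs_coef rs_coefnn ip_rs_poly_Xn qbinomnn //.
  by rewrite subrr !mul1r.
by rewrite ip_rs_poly_Xn qbinom_small // !mul0r mulr0.
Qed.

Lemma gen_moment_rs n r s : gen_moment alpha c n r s =
  \sum_(j < r.+1) rs_coef r j * qbinom q (n + j) s * t ^+ (absz ((n + j)%:Z - s%:Z) ^ 2).
Proof.
have size_XnP : (size ('X^n * rs_poly r)%R <= n + r.+1)%N.
  by rewrite (leq_trans (size_polyMleq _ _)) // size_polyXn leq_add2l size_rs_poly.
rewrite /gen_moment !Phi_rs ip_rs_poly (ip_expandr c _ size_XnP) big_split_ord /=.
rewrite big1 => [|k _]; last by rewrite coefXnM ltn_ord conjC0 mul0r.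
rewrite add0r mulr_suml; apply: eq_bigr => j _.
rewrite coefXnM ltnNge leq_addr /= addKn coef_rs_poly conj_rs_coef ip_rs_poly_Xn.
by rewrite !mulrA mulfK ?qfact_neq0.
Qed.

End RogersSzego.

Theorem proposition4p14 (R : realType) (q : R) (hq0 : 0 < q) (hq1 : q < 1)
  (c : int -> R[i]) (hL : orthogonal_functional (rs_alpha q) c)
  (n r s : nat) :
  gen_moment (rs_alpha q) c n r s =
  ((\sum_(j < r.+1)
      (-1) ^+ (r - j) * qbinom q r j * qbinom q (n + j) s
      * Num.sqrt q ^+ (r - j)
      * Num.sqrt q ^+ (absz ((n + j)%:Z - s%:Z) ^ 2)) : R)%:C%C.
Proof.
pose t : R[i] := (Num.sqrt q)%:C%C.
have t_real : t^* = t by exact: conjc_real.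
have t_neq0 : t != 0 by rewrite fmorph_eq0 gt_eqF ?sqrtr_gt0.
have t2 : t ^+ 2 = q%:C%C by rewrite -rmorphXn sqr_sqrtr ?ltW.
have q_not_root1 i : (t ^+ 2) ^+ i.+1 != 1.
  by rewrite t2 -rmorphXn fmorph_eq1 lt_eqF // exprn_ilt1 ?ltW.
have alphaE k : rs_alpha q k = (-1) ^+ k * t ^+ k.+1.
  by rewrite /rs_alpha rmorphM !rmorphXn rmorphN1.
case: hL => c0 [kappa [_ ip_Phi]].
have Phi_orth m m' : m != m' -> ip c (Phi (rs_alpha q) m) (Phi (rs_alpha q) m') = 0.
  by move=> neq_mm'; rewrite ip_Phi (negbTE neq_mm').
rewrite (gen_moment_rs t_real t_neq0 q_not_root1 alphaE c0 Phi_orth) rmorph_sum.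
apply: eq_bigr => j _.
by rewrite /rs_coef t2 4!rmorphM !rmorph_qbinom !rmorphXn rmorphN1; ring.
Qed.
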